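(* For every $\xi \in \Xi^{+}$, $$\phi_D(\xi)=\min_{\mu\in\Xi^{+}}\sum_{x\in\mathcal{X}} H_D(\mu,x)\,\xi(x),\qquad H_D(\mu,x)=\frac{\det^{1/p}[M(\mu)]}{p}\,f^\top(x)M^{-1}(\mu)f(x),$$ and the minimum is attained at $\mu=\xi$.
   Context: $\mathcal{X}$ is a finite set (the design space) and $f:\mathcal{X}\to\mathbb{R}^p$ is a given function. $\Xi$ denotes the set of all probability measures $\xi$ on $\mathcal{X}$ (i.e. $\xi(x)\ge 0$, $\sum_{x\in\mathcal{X}}\xi(x)=1$). The information matrix of $\xi\in\Xi$ is $M(\xi)=\sum_{x\in\mathcal{X}} f(x)f^\top(x)\xi(x)$, and $\Xi^{+}=\{\mu\in\Xi: M(\mu)\text{ is nonsingular}\}$. The $D$-optimality criterion is $\phi_D(\xi)=\det^{1/p}[M(\xi)]$. *)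

From HB Require Import structures.
From mathcomp Require Import all_boot all_order all_algebra.
From Stdlib Require Import ClassicalEpsilon.
Set Implicit Arguments. Unset Strict Implicit. Unset Printing Implicit Defensive.
Import Order.TTheory GRing.Theory Num.Theory.
Local Open Scope ring_scope.

(* nonnegative p-th root: the (chosen) y >= 0 with y ^+ p = x
   (unique and existing in a real closed field when x >= 0, p > 0) *)
Definition rootr (R : rcfType) (p : nat) (x : R) : R :=
  epsilon (inhabits 0) (fun y : R => 0 <= y /\ y ^+ p = x).

Definition is_design (R : rcfType) (X : finType) (xi : X -> R) : Prop :=
  (forall x, 0 <= xi x) /\ \sum_(x : X) xi x = 1.

Definition infmx (R : rcfType) (X : finType) (p : nat)
    (f : X -> 'cV[R]_p) (xi : X -> R) : 'M[R]_p :=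
  \sum_(x : X) xi x *: (f x *m (f x)^T).

Definition is_nonsing_design (R : rcfType) (X : finType) (p : nat)
    (f : X -> 'cV[R]_p) (xi : X -> R) : Prop :=
  is_design xi /\ infmx f xi \in unitmx.

Definition phiD (R : rcfType) (X : finType) (p : nat)
    (f : X -> 'cV[R]_p) (xi : X -> R) : R :=
  rootr p (\det (infmx f xi)).

Definition HD (R : rcfType) (X : finType) (p : nat)
    (f : X -> 'cV[R]_p) (mu : X -> R) (x : X) : R :=
  phiD f mu / p%:R * ((f x)^T *m invmx (infmx f mu) *m f x) 0 0.

(* Write M = M(mu) and N = M(xi).  Linearity of the trace gives
   sum_x H_D(mu, x) xi(x) = phi_D(mu) / p * tr (M^-1 N), which is phi_D(xi) at mu = xi.
   Choosing P with P M P^T = I, the positive definite B = P N P^T has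
   tr B = tr (M^-1 N) and det N = det M * det B; Hadamard's inequality and AM-GM give
   det B <= prod_i B_ii <= (tr B / p)^p, i.e. det^(1/p) N <= det^(1/p) M * tr (M^-1 N) / p.
   Both P and Hadamard's inequality come from induction on the dimension, eliminating
   the first row and column of a positive definite matrix by a congruence of determinant 1
   (the Schur complement). *)

From HB Require Import structures.
From mathcomp Require Import all_boot all_order all_algebra ring.
From Stdlib Require Import ClassicalEpsilon.
Set Implicit Arguments. Unset Strict Implicit. Unset Printing Implicit Defensive.
Import Order.TTheory GRing.Theory Num.Theory.
Local Open Scope ring_scope.

Section PosDef.
Variable R : realFieldType.

Definition posdef n (B : 'M[R]_n) :=
  B^T = B /\ forall v : 'cV_n, v != 0 -> 0 < (v^T *m B *m v) 0 0.

Lemma posdef_congr n (P B : 'M[R]_n) :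
  P \in unitmx -> posdef B -> posdef (P *m B *m P^T).
Proof.
move=> uP [sB qB]; split; first by rewrite !trmx_mul trmxK sB mulmxA.
move=> v v0.
have -> : v^T *m (P *m B *m P^T) *m v = (P^T *m v)^T *m B *m (P^T *m v).
  by rewrite trmx_mul trmxK !mulmxA.
apply: qB; apply: contraNneq v0 => Pv0.
have uPt : P^T \in unitmx by rewrite unitmx_tr.
by rewrite -(mulKmx uPt v) Pv0 mulmx0.
Qed.

Lemma posdef_diag_gt0 n (B : 'M[R]_n) i : posdef B -> 0 < B i i.
Proof.
move=> [_ qB]; have := qB (delta_mx i 0).
have -> : (delta_mx i 0 : 'cV[R]_n) != 0.
  by apply/negP => /eqP/matrixP/(_ i 0); rewrite !mxE !eqxx => /eqP; rewrite oner_eq0.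
by move=> /(_ isT); rewrite trmx_delta -rowE -colE !mxE.
Qed.

Lemma mulmx_col_block_quad n (a : 'M[R]_1) b c (C : 'M[R]_n) x (y : 'cV_n) :
  (col_mx x y)^T *m block_mx a b c C *m col_mx x y =
  x^T *m a *m x + x^T *m b *m y + (y^T *m c *m x + y^T *m C *m y).
Proof.
rewrite tr_col_mx mul_row_block mul_row_col !mulmxDl.
by rewrite -!addrA; congr (_ + _); rewrite addrCA.
Qed.

Lemma posdef_block_diag n (a : 'M[R]_1) (C : 'M[R]_n) :
  posdef (block_mx a 0 0 C) -> posdef C.
Proof.
move=> [sB qB]; split; first by move: sB; rewrite tr_block_mx => /eq_block_mx [].
move=> v v0; have := qB (col_mx 0 v).
rewrite col_mx_eq0 (negbTE v0) andbF => /(_ isT).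
by rewrite mulmx_col_block_quad !mulmx0 !mul0mx !add0r.
Qed.

Lemma schur_complement_congr n (a : 'M[R]_1) (b : 'rV_n) (C : 'M_n) : a 0 0 != 0 ->
  let E := block_mx 1%:M 0 (- (a 0 0)^-1 *: b^T) 1%:M in
  E *m block_mx a b b^T C *m E^T = block_mx a 0 0 (C - (a 0 0)^-1 *: (b^T *m b))
  /\ \det E = 1.
Proof.
move=> a0 E; split; last by rewrite /E det_lblock !det1 mulr1.
rewrite /E tr_block_mx !trmx1 trmx0 !mulmx_block.
rewrite !mul1mx !mul0mx !addr0 !mulmx1 !mulmx0 ?add0r.
have aE : a = (a 0 0)%:M by apply: mx11_scalar.
have elim_l : - (a 0 0)^-1 *: b^T *m a + b^T = 0.
  by rewrite {2}aE mul_mx_scalar scalerA mulrN mulfV // scaleN1r addNr.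
have elim_r : a *m (- (a 0 0)^-1 *: b^T)^T + b = 0.
  have aT : a^T = a by rewrite {1}aE tr_scalar_mx -aE.
  by rewrite -[LHS]trmxK linearD /= trmx_mul trmxK aT elim_l trmx0.
rewrite elim_l elim_r; congr block_mx.
- by apply/matrixP => i j; rewrite !mxE addr0.
- by apply/matrixP => i j; rewrite !mxE addr0.
- by rewrite mul0mx add0r -scalemxAl scaleNr addrC.
Qed.

Lemma posdef_schur n (B : 'M[R]_(1 + n)) : posdef B ->
  exists2 E : 'M_(1 + n), \det E = 1 &
  exists2 C : 'M_n, E *m B *m E^T = block_mx (ulsubmx B) 0 0 C &
    [/\ posdef C, 0 < ulsubmx B 0 0 & forall i, C i i <= drsubmx B i i].
Proof.
move=> pdB; have [sB _] := pdB.
set a := ulsubmx B; set b := ursubmx B.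
have eB : B = block_mx a b b^T (drsubmx B).
  move: sB; rewrite -{1 2}(submxK B) tr_block_mx => /eq_block_mx [_ _ -> _].
  by rewrite submxK.
have a_gt0 : 0 < a 0 0 by have := posdef_diag_gt0 (lshift n 0) pdB; rewrite eB block_mxEul.
have [eE dE] := schur_complement_congr b (drsubmx B) (lt0r_neq0 a_gt0).
set E := block_mx _ _ _ _ in eE dE.
have uE : E \in unitmx by rewrite unitmxE dE unitr1.
exists E => //; exists (drsubmx B - (a 0 0)^-1 *: (b^T *m b)); first by rewrite {1}eB.
have := posdef_congr uE pdB; rewrite {1}eB eE => /posdef_block_diag pdC.
split=> // i; have bb_ge0 : 0 <= (b^T *m b) i i.
  by rewrite mxE big_ord1 !mxE -expr2 sqr_ge0.
by rewrite mxE [X in _ + X]mxE [X in _ - X]mxE gerBl mulr_ge0 // invr_ge0 ltW.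
Qed.

Lemma det_congr1 n (E B : 'M[R]_n) : \det E = 1 -> \det (E *m B *m E^T) = \det B.
Proof. by move=> dE; rewrite !det_mulmx det_tr dE mul1r mulr1. Qed.

Lemma posdef_det_gt0 n (B : 'M[R]_n) : posdef B -> 0 < \det B.
Proof.
elim: n B => [|n IH] B pdB; first by rewrite det_mx00.
move: B pdB; rewrite -[n.+1]/(1 + n)%N => B pdB.
have [E dE [C eC [pdC a_gt0 _]]] := posdef_schur pdB.
by rewrite -(det_congr1 _ dE) eC det_ublock det_mx11 mulr_gt0 // IH.
Qed.

Lemma det_le_prod_diag n (B : 'M[R]_n) : posdef B -> \det B <= \prod_i B i i.
Proof.
elim: n B => [|n IH] B pdB; first by rewrite det_mx00 big_ord0.
move: B pdB; rewrite -[n.+1]/(1 + n)%N => B pdB.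
have [E dE [C eC [pdC a_gt0 C_le]]] := posdef_schur pdB.
rewrite -(det_congr1 _ dE) eC det_ublock det_mx11 big_split_ord /= big_ord1.
have aE : ulsubmx B 0 0 = B (lshift n 0) (lshift n 0) by rewrite !mxE.
rewrite aE ler_pM2l -?aE //; apply: le_trans (IH _ pdC) _.
apply: ler_prod => i _; rewrite (ltW (posdef_diag_gt0 i pdC)).
by have := C_le i; rewrite !mxE.
Qed.

End PosDef.

Section PosDefRcf.
Variable R : rcfType.

Lemma posdef_congr_eye n (M : 'M[R]_n) :
  posdef M -> exists P : 'M_n, P *m M *m P^T = 1%:M.
Proof.
elim: n M => [|n IH] M pdM; first by exists 1%:M; apply/matrixP => -[].
move: M pdM; rewrite -[n.+1]/(1 + n)%N => M pdM.
have [E _ [C eC [pdC a_gt0 _]]] := posdef_schur pdM.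
have [Q eQ] := IH _ pdC.
set a := ulsubmx M 0 0 in a_gt0; set s := Num.sqrt a.
have s_gt0 : 0 < s by rewrite sqrtr_gt0.
have ss : s^-1 * a * s^-1 = 1.
  by rewrite -[a](sqr_sqrtr (ltW a_gt0)) -/s expr2 mulKf ?mulfV // lt0r_neq0.
pose S : 'M_(1 + n) := block_mx (s^-1)%:M 0 0 Q.
exists (S *m E); rewrite trmx_mul !mulmxA -(mulmxA S) -(mulmxA S) eC.
rewrite /S tr_block_mx !trmx0 tr_scalar_mx !mulmx_block !mulmx0 !mul0mx !addr0 !add0r.
by rewrite !mul0mx eQ (scalar_mx_block 1 n) [ulsubmx M]mx11_scalar -!scalar_mxM ss.
Qed.

Lemma posdef_congr_pair n (M N : 'M[R]_n) : posdef M -> posdef N ->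
  exists B : 'M[R]_n, [/\ posdef B, \tr (invmx M *m N) = \sum_i B i i
              & \det N = \det M * \det B].
Proof.
move=> pdM pdN; have [P eP] := posdef_congr_eye pdM.
have dMP : \det M * \det P ^+ 2 = 1.
  by rewrite -(det1 R n) -eP !det_mulmx det_tr; ring.
have uM : M \in unitmx by rewrite unitmxE unitfE lt0r_neq0 ?posdef_det_gt0.
have uP : P \in unitmx.
  rewrite unitmxE unitfE; apply: contra_eq_neq dMP => ->.
  by rewrite expr0n mulr0 eq_sym oner_eq0.
have iM : invmx M = P^T *m P.
  have PtPM : P^T *m (P *m M) = 1%:M := mulmx1C eP.
  by rewrite -[RHS](mulmxK uM) -(mulmxA P^T) PtPM mul1mx.
exists (P *m N *m P^T); split; first exact: posdef_congr.
  by rewrite iM -[P^T *m P *m N]mulmxA mxtrace_mulC.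
by rewrite !det_mulmx det_tr -[LHS]mul1r -dMP; ring.
Qed.

Lemma trace_invmx_mul_ge0 n (M N : 'M[R]_n) :
  posdef M -> posdef N -> 0 <= \tr (invmx M *m N).
Proof.
move=> pdM pdN; have [B [pdB -> _]] := posdef_congr_pair pdM pdN.
by apply: sumr_ge0 => i _; apply/ltW/posdef_diag_gt0.
Qed.

Lemma det_le_trace_invmx_mul n (M N : 'M[R]_n) : posdef M -> posdef N ->
  \det N <= \det M * (\tr (invmx M *m N) / n%:R) ^+ n.
Proof.
move=> pdM pdN; have [B [pdB -> ->]] := posdef_congr_pair pdM pdN.
rewrite ler_pM2l ?posdef_det_gt0 //; apply: le_trans (det_le_prod_diag pdB) _.
have := leif_AGM (A := [pred i : 'I_n | true]) (E := fun i => B i i).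
rewrite /= cardT size_enum_ord => /(_ _) [] //.
by move=> i _; apply/ltW/posdef_diag_gt0.
Qed.

End PosDefRcf.

Lemma rootr_spec (R : rcfType) p (x : R) :
  (0 < p)%N -> 0 <= x -> 0 <= rootr p x /\ rootr p x ^+ p = x.
Proof.
move=> p_gt0 x_ge0; apply: (epsilon_spec (inhabits 0) (fun y => 0 <= y /\ y ^+ p = x)).
have [y /andP [y_ge0 _] rooty] : exists2 y, 0 <= y <= 1 + x & root ('X^p - x%:P) y.
  apply: poly_ivt; first by rewrite addr_ge0.
  rewrite !hornerE expr0n -(prednK p_gt0) /= sub0r oppr_le0 x_ge0 /= subr_ge0.
  rewrite prednK //; apply: le_trans (ler_eXnr p_gt0 _); first by rewrite lerDr.
  by rewrite lerDl.
by exists y; split => //; move: rooty; rewrite rootE !hornerE subr_eq0 => /eqP.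
Qed.

Section Design.
Variables (R : rcfType) (X : finType) (p : nat) (f : X -> 'cV[R]_p).

Lemma infmx_tr xi : (infmx f xi)^T = infmx f xi.
Proof.
rewrite /infmx linear_sum; apply: eq_bigr => x _.
by rewrite linearZ /= trmx_mul trmxK.
Qed.

Lemma infmx_quad xi (v : 'cV[R]_p) :
  (v^T *m infmx f xi *m v) 0 0 = \sum_x xi x * (((f x)^T *m v) 0 0) ^+ 2.
Proof.
rewrite /infmx mulmx_sumr mulmx_suml summxE; apply: eq_bigr => x _.
rewrite -scalemxAr -scalemxAl mxE (mulmxA v^T) -mulmxA.
have -> : v^T *m f x = ((f x)^T *m v)^T by rewrite trmx_mul trmxK.
by rewrite mxE big_ord1 !mxE expr2.
Qed.

Lemma infmx_posdef xi : is_nonsing_design f xi -> posdef (infmx f xi).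
Proof.
move=> [[xi_ge0 _] uM]; split; first exact: infmx_tr.
move=> v v0; rewrite infmx_quad.
have terms_ge0 x : 0 <= xi x * (((f x)^T *m v) 0 0) ^+ 2 by rewrite mulr_ge0 ?sqr_ge0.
rewrite lt_def sumr_ge0 ?andbT //; apply: contra v0 => /eqP.
move=> /psumr_eq0P terms0; have {}terms0 x := terms0 (fun y _ => terms_ge0 y) x isT.
have Mv : infmx f xi *m v = 0.
  rewrite /infmx mulmx_suml big1 // => x _.
  rewrite -scalemxAl -mulmxA [_ *m v]mx11_scalar mul_mx_scalar scalerA.
  have /eqP := terms0 x; rewrite expr2 mulrA mulf_eq0 => /orP [] /eqP ->.
    by rewrite scale0r.
  by rewrite mulr0 scale0r.
by rewrite -(mulKmx uM v) Mv mulmx0.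
Qed.

Lemma phiD_spec xi : (0 < p)%N -> is_nonsing_design f xi ->
  0 <= phiD f xi /\ phiD f xi ^+ p = \det (infmx f xi).
Proof.
move=> p_gt0 /infmx_posdef /posdef_det_gt0 /ltW det_ge0.
exact: rootr_spec.
Qed.

Lemma sum_HD mu xi : \sum_x HD f mu x * xi x =
  phiD f mu / p%:R * \tr (invmx (infmx f mu) *m infmx f xi).
Proof.
rewrite [infmx f xi]/infmx mulmx_sumr linear_sum /= mulr_sumr; apply: eq_bigr => x _.
rewrite -scalemxAr mxtraceZ mulmxA mxtrace_mulC mulmxA /HD /mxtrace big_ord1.
by ring.
Qed.

End Design.

Theorem theorem1 (R : rcfType) (X : finType) (p : nat) (hp : (0 < p)%N)
    (f : X -> 'cV[R]_p) (xi : X -> R) (hxi : is_nonsing_design f xi) :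
  phiD f xi = \sum_(x : X) HD f xi x * xi x /\
  (forall mu : X -> R, is_nonsing_design f mu ->
     phiD f xi <= \sum_(x : X) HD f mu x * xi x).
Proof.
have p_neq0 : p%:R != 0 :> R by rewrite pnatr_eq0 -lt0n.
split.
  by rewrite sum_HD mulVmx ?mxtrace1 ?divfK //; case: hxi.
move=> mu hmu; rewrite sum_HD.
have pdM := infmx_posdef hmu; have pdN := infmx_posdef hxi.
have [y_ge0 y_pow] := phiD_spec hp hxi; have [z_ge0 z_pow] := phiD_spec hp hmu.
have t_ge0 : 0 <= \tr (invmx (infmx f mu) *m infmx f xi) / p%:R.
  by rewrite divr_ge0 ?trace_invmx_mul_ge0.
rewrite mulrAC -mulrA -(ler_pXn2r hp) ?nnegrE ?(mulr_ge0 z_ge0 t_ge0) //.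
by rewrite exprMn z_pow y_pow det_le_trace_invmx_mul.
Qed.
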